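(* Let $p(z)$, $E$, $\Sigma_1$, $\Sigma_2$ be as in the context. Then \[ \mathrm{Im}\,(p(z)-E)>0\quad\text{for } z\in\mathbb{C}^+\setminus\Sigma_1,\qquad \mathrm{Im}\,(p(z)-E)<0\quad\text{for } z\in\mathbb{C}^-\setminus\Sigma_2 . \]
   Context: Fix $z_j=\xi_j+\mathrm{i}\eta_j$ ($j=1,2$) with $0<\eta_1<\eta_2$, and consider the genus-one Riemann surface $R^2=(z-z_1)(z-\bar z_1)(z-z_2)(z-\bar z_2)$, with sheet 1 determined by $R>0$ for $\mathrm{Re}\,z>0$ large, a canonical homology basis $\mathcal{A},\mathcal{B}$ satisfying $\sigma(\mathcal{A})=-\mathcal{A}$, $\sigma(\mathcal{B})=\mathcal{B}$ under the anti-holomorphic involution $\sigma(z,R)=(\bar z,\bar R)$. Let $\mathrm{d}p$ be the unique meromorphic differential of the second kind with $\mathrm{d}p=\pm(1+\mathcal{O}(z^{-2}))\mathrm{d}z$ as $z\to\infty^\pm$ and $\oint_{\mathcal{A}}\mathrm{d}p=0$ (explicitly $\mathrm{d}p=\frac{z^2-\mathrm{Re}(z_1+z_2)z+c_0}{R}\mathrm{d}z$ for a real constant $c_0$). Let $p(z)=\int_{z_2}^z\mathrm{d}p$ on sheet 1, so that $p(z)=z+E+\mathcal{O}(z^{-1})$ as $z\to\infty$, with $E\in\mathbb{R}$. It is assumed that the level set $\{z:\mathrm{Im}\,p(z)=0\}$ consists of $\mathbb{R}$ together with two arcs not meeting $\mathbb{R}$: $\Sigma_1\subset\mathbb{C}^+$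 joining $z_1$ to $z_2$ and $\Sigma_2=\overline{\Sigma_1}\subset\mathbb{C}^-$ joining $\bar z_1$ to $\bar z_2$; these are the branch cuts of $R$, and $p$ is single-valued and analytic on $\mathbb{C}\setminus(\Sigma_1\cup\Sigma_2)$ (the $\mathcal{A}$-normalization makes it single valued). *)

From Stdlib Require Import Reals.
From Coquelicot Require Export Coquelicot.
Open Scope R_scope.

(* The quartic (z - z1)(z - conj z1)(z - z2)(z - conj z2) under the square root R. *)
Definition quartic (z1 z2 z : C) : C :=
  ((z - z1) * (z - Cconj z1) * (z - z2) * (z - Cconj z2))%C.

Definition is_arc (gamma : R -> C) (a b : C) : Prop :=
  (forall t : R, continuous gamma t) /\
  (forall s t : R, 0 <= s <= 1 -> 0 <= t <= 1 -> gamma s = gamma t -> s = t) /\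
  gamma 0 = a /\ gamma 1 = b.

Definition on_arc (gamma : R -> C) (z : C) : Prop :=
  exists t : R, 0 <= t <= 1 /\ gamma t = z.

Definition on_conj_arc (gamma : R -> C) (z : C) : Prop := on_arc gamma (Cconj z).

(* Omega = C \ (Sigma_1 ∪ Sigma_2), the domain of analyticity of R and p. *)
Definition Omega (gamma : R -> C) (z : C) : Prop :=
  ~ on_arc gamma z /\ ~ on_conj_arc gamma z.

From Stdlib Require Import Reals Lra Classical ClassicalEpsilon.
From Coquelicot Require Import Coquelicot.
From HB Require structures.
From mathcomp Require all_boot all_order all_algebra.
From mathcomp Require all_classical all_reals all_analysis Rstruct Rstruct_topology.
Open Scope R_scope.

(** For s = 1 or s = -1 let g = s Im p on the half-plane s Im z > 0 cut along
    Sigma_1 or Sigma_2.  It is continuous, tends to 0 at the real axis and at the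
    cut, and is at least -O(1/|z|) at infinity because Im E = 0.  It has no local
    minimum: p' = Q/R with R <> 0 off the branch points, and the zeros of
    Q(z) = z^2 - Re(z1+z2) z + c0 are simple there since Q'(z) is not real, so along
    a suitable ray the mean value theorem makes g decrease.  If g took a negative
    value, min(g, 0), extended by 0 off the domain, would be continuous on C and
    attain a negative minimum on a large square at a point of the domain, which is
    impossible.  Hence g >= 0, and g <> 0 since Im p vanishes only on the real axis. *)

Module BoxMinimum.
Import HB.structures all_boot all_order all_algebra.
Import all_classical all_reals all_analysis Rstruct Rstruct_topology.
Import Order.TTheory GRing.Theory Num.Theory.
Import numFieldNormedType.Exports.
Local Open Scope classical_set_scope.

Lemma continuous2_attains_min (f : R -> R -> R) (a b c d : R) : Rle a b -> Rle c d ->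
  (forall x y e, Rlt 0 e -> exists del, Rlt 0 del /\ forall x' y',
     Rlt (Rabs (Rminus x' x)) del -> Rlt (Rabs (Rminus y' y)) del ->
     Rlt (Rabs (Rminus (f x' y') (f x y))) e) ->
  exists x0 y0, (Rle a x0 /\ Rle x0 b) /\ (Rle c y0 /\ Rle y0 d) /\
    forall x y, (Rle a x /\ Rle x b) -> (Rle c y /\ Rle y d) -> Rle (f x0 y0) (f x y).
Proof.
move=> ab cd fc.
pose A := `[a, b]%classic `*` `[c, d]%classic.
have A0 : A !=set0.
  by exists (a, c); split; rewrite /= in_itv /=; apply/andP; split; apply/RleP; lra.
have cA : compact A by apply: compact_setX; apply: segment_compact.
have cf : {within A, continuous (fun p : R * R => f p.1 p.2)}.
  apply: continuous_subspaceT => p.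
  apply/cvg_ballP => e /RltP e0.
  have [del [/RltP del0 H]] := fc p.1 p.2 e e0.
  exists (ball p.1 del, ball p.2 del); first by split; apply: nbhsx_ballx.
  move=> q [/= h1 h2]; rewrite /ball /= in h1 h2 *.
  rewrite distrC in h1; rewrite distrC in h2; rewrite distrC.
  by apply/RltP; apply: H; apply/RltP.
have [[x0 y0] /set_mem [/= hx hy] hmin] := compact_EVT_min A0 cA cf.
exists x0, y0.
move: hx hy; rewrite !in_itv /= => /andP [/RleP ? /RleP ?] /andP [/RleP ? /RleP ?].
do 2 (split; first by split).
move=> x y [hx1 hx2] [hy1 hy2]; apply/RleP; apply: (hmin (x, y)).
by apply/mem_set; split; rewrite /= in_itv /=; apply/andP; split; apply/RleP.
Qed.

End BoxMinimum.

Ltac Cunfold := unfold Re, Im, Cminus, Cplus, Copp, Cmult, RtoC, Cconj in *; simpl in *.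

Lemma im_le_Cmod (c : C) : Rabs (Im c) <= Cmod c.
Proof.
  destruct c as [x y]. unfold Cmod, Im; simpl.
  rewrite <- sqrt_Rsqr_abs. apply sqrt_le_1_alt. unfold Rsqr. nra.
Qed.

Lemma ball_C (z w : C) (e : R) :
  ball z e w <-> Rabs (Re w - Re z) < e /\ Rabs (Im w - Im z) < e.
Proof. reflexivity. Qed.

Lemma is_derive_C_continuous (f : C -> C) (z D : C) :
  is_derive (K := C_AbsRing) (V := C_NormedModule) f z D -> continuous f z.
Proof.
  intros Hd. eapply filterlim_filter_le_1;
    [|exact (ex_derive_continuous f z (ex_intro _ D Hd))].
  exact (locally_le_locally_norm (K := C_AbsRing) (V := C_NormedModule) z).
Qed.

Lemma continuous_Re_comp {T : UniformSpace} (f : T -> C) (x : T) :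
  continuous f x -> continuous (fun y => Re (f y)) x.
Proof.
  intros Hf. apply filterlim_locally. intros eps.
  generalize (proj1 (filterlim_locally _ _) Hf eps). apply filter_imp. now intros y [H _].
Qed.

Lemma continuous_Im_comp {T : UniformSpace} (f : T -> C) (x : T) :
  continuous f x -> continuous (fun y => Im (f y)) x.
Proof.
  intros Hf. apply filterlim_locally. intros eps.
  generalize (proj1 (filterlim_locally _ _) Hf eps). apply filter_imp. now intros y [_ H].
Qed.

Lemma continuous_C_of_Re_Im {T : UniformSpace} (f : T -> C) (x : T) :
  continuous (fun y => Re (f y)) x -> continuous (fun y => Im (f y)) x -> continuous f x.
Proof.
  intros Hre Him. apply filterlim_locally. intros eps.
  generalize (filter_and _ _ (proj1 (filterlim_locally _ _) Hre eps)
                             (proj1 (filterlim_locally _ _) Him eps)).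
  apply filter_imp. now intros y [H1 H2]; split.
Qed.

Lemma continuous_Cpoly2 (a0 a1 a2 : C) (t : R) :
  continuous (fun t : R => a0 + RtoC t * (a1 + RtoC t * a2))%C t.
Proof.
  apply continuous_C_of_Re_Im;
    apply (ex_derive_continuous (K := R_AbsRing) (V := R_NormedModule)).
  - apply (ex_derive_ext (fun t => Re a0 + t * (Re a1 + t * Re a2))).
    { intros; Cunfold; ring. }
    auto_derive; auto.
  - apply (ex_derive_ext (fun t => Im a0 + t * (Im a1 + t * Im a2))).
    { intros; Cunfold; ring. }
    auto_derive; auto.
Qed.

Lemma continuous_Cline (a b : C) (t : R) : continuous (fun t : R => a + RtoC t * b)%C t.
Proof.
  apply (continuous_ext (fun t : R => a + RtoC t * (b + RtoC t * 0))%C).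
  - intros; apply injective_projections; Cunfold; ring.
  - apply continuous_Cpoly2.
Qed.

Lemma filterlim_Cline_0 (z u : C) :
  filterlim (fun t : R => z + RtoC t * u)%C (locally 0) (locally z).
Proof.
  assert (Hz : (z + RtoC 0 * u)%C = z) by (apply injective_projections; Cunfold; ring).
  generalize (continuous_Cline z u 0). unfold continuous. now rewrite Hz.
Qed.

Lemma continuous_Im_mul_conj {T : UniformSpace} (A B : T -> C) (x : T) :
  continuous A x -> continuous B x -> continuous (fun y => Im (A y * Cconj (B y))) x.
Proof.
  intros HA HB.
  apply (continuous_ext (fun y => Im (A y) * Re (B y) - Re (A y) * Im (B y))).
  { intros y; Cunfold; ring. }
  apply (continuous_minus (V := R_NormedModule) (fun y => Im (A y) * Re (B y))
                                                (fun y => Re (A y) * Im (B y)));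
    apply (continuous_mult (K := R_AbsRing));
    auto using continuous_Re_comp, continuous_Im_comp.
Qed.

Lemma locally_lt_of_continuous {T : UniformSpace} (f : T -> R) (x : T) (c : R) :
  continuous f x -> f x < c -> locally x (fun y => f y < c).
Proof.
  intros Hf Hc. assert (He : 0 < c - f x) by lra.
  generalize (proj1 (filterlim_locally _ _) Hf (mkposreal _ He)). apply filter_imp.
  intros y Hy. change (Rabs (f y - f x) < c - f x) in Hy.
  apply Rabs_def2 in Hy. lra.
Qed.

Lemma continuous_attains_min_on_square (h : C -> R) (B : R) :
  0 <= B -> (forall z, continuous h z) ->
  exists zs, Rabs (Re zs) <= B /\ Rabs (Im zs) <= B /\
    forall w, Rabs (Re w) <= B -> Rabs (Im w) <= B -> h zs <= h w.
Proof.
  intros HB Hh.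
  destruct (BoxMinimum.continuous2_attains_min (fun x y => h (x, y)) (- B) B (- B) B)
    as [x0 [y0 [Hx0 [Hy0 Hmin]]]]; try lra.
  { intros x y e He.
    destruct (proj1 (filterlim_locally _ _) (Hh (x, y)) (mkposreal e He)) as [del Hdel].
    exists del; split; [apply cond_pos|]. intros x' y' Hx' Hy'.
    exact (Hdel (x', y') (conj Hx' Hy')). }
  exists (x0, y0). unfold Re, Im; simpl.
  split; [now apply Rabs_le|]. split; [now apply Rabs_le|].
  intros [x y] Hx Hy. apply Hmin; now apply Rabs_le_between.
Qed.

Lemma Rmin_0_lipschitz (a b : R) : Rabs (Rmin a 0 - Rmin b 0) <= Rabs (a - b).
Proof.
  unfold Rmin; destruct (Rle_dec a 0), (Rle_dec b 0);
  unfold Rabs; repeat destruct Rcase_abs; lra.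
Qed.

Section MinimumPrinciple.

Variables (U : C -> Prop) (g : C -> R).
Hypothesis U_open : open U.
Hypothesis g_continuous : forall z, U z -> continuous g z.
Hypothesis g_boundary : forall z, ~ U z -> filterlim g (within U (locally z)) (locally 0).
Hypothesis g_at_infinity :
  forall eps, 0 < eps -> exists M, forall z, M < Cmod z -> U z -> - eps <= g z.
Hypothesis g_no_local_min : forall z, U z -> ~ locally z (fun w => g z <= g w).

Let trunc (z : C) : R := if excluded_middle_informative (U z) then Rmin (g z) 0 else 0.

Let trunc_in z : U z -> trunc z = Rmin (g z) 0.
Proof. unfold trunc; destruct excluded_middle_informative; tauto. Qed.

Let trunc_out z : ~ U z -> trunc z = 0.
Proof. unfold trunc; destruct excluded_middle_informative; tauto. Qed.

Let trunc_continuous z : continuous trunc z.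
Proof.
  apply filterlim_locally. intros eps.
  destruct (classic (U z)) as [Hz|Hz].
  - generalize (filter_and _ _ (U_open z Hz)
                  (proj1 (filterlim_locally _ _) (g_continuous z Hz) eps)).
    apply filter_imp. intros w [Hw Hgw].
    change (Rabs (trunc w - trunc z) < eps). change (Rabs (g w - g z) < eps) in Hgw.
    rewrite (trunc_in w Hw), (trunc_in z Hz).
    eapply Rle_lt_trans; [apply Rmin_0_lipschitz | exact Hgw].
  - pose proof (g_boundary z Hz _ (locally_ball 0 eps)) as Hb.
    unfold filtermap, within in Hb. revert Hb. apply filter_imp. intros w Hw.
    change (Rabs (trunc w - trunc z) < eps). rewrite (trunc_out z Hz).
    destruct (classic (U w)) as [HUw|HUw].
    + specialize (Hw HUw). change (Rabs (g w - 0) < eps) in Hw.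
      rewrite (trunc_in w HUw).
      replace (Rmin (g w) 0 - 0) with (Rmin (g w) 0 - Rmin 0 0)
        by (rewrite (Rmin_left 0 0) by lra; ring).
      eapply Rle_lt_trans; [apply Rmin_0_lipschitz | exact Hw].
    + rewrite (trunc_out w HUw), Rminus_0_r, Rabs_R0. apply cond_pos.
Qed.

Lemma minimum_principle z0 : U z0 -> 0 <= g z0.
Proof.
  intros Hz0. apply Rnot_lt_le. intros Hneg.
  destruct (g_at_infinity (- g z0 / 2)) as [M HM]; [lra|].
  set (B := Rmax M (Cmod z0) + 1).
  assert (HMB : M + 1 <= B) by (unfold B; pose proof (Rmax_l M (Cmod z0)); lra).
  assert (Hz0B : Cmod z0 + 1 <= B) by (unfold B; pose proof (Rmax_r M (Cmod z0)); lra).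
  pose proof (Cmod_ge_0 z0).
  destruct (continuous_attains_min_on_square trunc B) as [zs [_ [_ Hmin]]];
    [lra | exact trunc_continuous |].
  assert (Hzs : trunc zs <= g z0).
  { rewrite <- (Rmin_left (g z0) 0) by lra. rewrite <- (trunc_in z0 Hz0).
    apply Hmin; eapply Rle_trans; [apply re_le_Cmod | lra | apply im_le_Cmod | lra]. }
  assert (HUzs : U zs).
  { apply NNPP. intros HUzs. rewrite (trunc_out zs HUzs) in Hzs. lra. }
  assert (Hgzs : trunc zs = g zs).
  { rewrite (trunc_in zs HUzs) in *. apply Rmin_left, Rnot_lt_le. intros Hpos.
    rewrite Rmin_right in Hzs; lra. }
  assert (Hzs_M : Cmod zs <= M).
  { apply Rnot_lt_le. intros Hfar. specialize (HM zs Hfar HUzs). lra. }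
  apply (g_no_local_min zs HUzs).
  generalize (filter_and _ _ (U_open zs HUzs) (locally_ball zs (mkposreal 1 Rlt_0_1))).
  apply filter_imp. intros w [HUw Hw].
  destruct (proj1 (ball_C zs w 1) Hw) as [Hwre Hwim].
  rewrite <- Hgzs. apply Rle_trans with (trunc w); [|rewrite (trunc_in w HUw); apply Rmin_l].
  pose proof (re_le_Cmod zs). pose proof (im_le_Cmod zs).
  apply Hmin; unfold Rabs in *; repeat destruct Rcase_abs; lra.
Qed.

End MinimumPrinciple.

Lemma Im_div_sign (s : R) (x y : C) : s * Im (x * Cconj y) < 0 -> s * Im (x / y) < 0.
Proof.
  destruct x as [x1 x2], y as [y1 y2]. unfold Cdiv, Cinv. Cunfold. intros H.
  assert (Hn : 0 < y1 * y1 + y2 * y2).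
  { destruct (Req_dec y1 0), (Req_dec y2 0); subst; nra. }
  match goal with |- ?L < 0 =>
    replace L with (s * (x1 * - y2 + x2 * y1) / (y1 * y1 + y2 * y2)) by (field; lra) end.
  apply Rdiv_neg_pos; assumption.
Qed.

Lemma exists_sqr_Im_neg (A : C) : A <> 0%C -> exists u : C, Im (u * u * A) < 0.
Proof.
  intros HA. destruct A as [a b].
  destruct (Rtotal_order b 0) as [Hb|[Hb|Hb]].
  - exists 1%C. Cunfold. nra.
  - subst b. destruct (Rtotal_order a 0) as [Ha|[Ha|Ha]].
    + exists (1, 1). Cunfold. nra.
    + subst a. easy.
    + exists (1, -1). Cunfold. nra.
  - exists Ci. unfold Ci. Cunfold. nra.
Qed.

Lemma exists_sqr_Im_mul_conj_neg (s : R) (q r : C) :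
  s <> 0 -> q <> 0%C -> r <> 0%C -> exists u : C, s * Im (u * u * q * Cconj r)%C < 0.
Proof.
  intros Hs Hq Hr.
  assert (Hsc : (RtoC s * q * Cconj r)%C <> 0%C).
  { repeat apply Cmult_neq_0; auto.
    - intros H. apply Hs. exact (f_equal fst H).
    - intros H. apply Hr. rewrite <- (Cconj_conj r), H.
      apply injective_projections; Cunfold; ring. }
  destruct (exists_sqr_Im_neg _ Hsc) as [u Hu]. exists u.
  replace (s * Im (u * u * q * Cconj r)%C)
    with (Im (u * u * (RtoC s * q * Cconj r))%C) by (Cunfold; ring).
  exact Hu.
Qed.

Lemma is_derive_C_little_o (f : C -> C) (z D : C) :
  is_derive (K := C_AbsRing) (V := C_NormedModule) f z D ->
  forall eps, 0 < eps -> exists del, 0 < del /\ forall w, Cmod (w - z) < del ->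
    Cmod (f w - f z - (w - z) * D) <= eps * Cmod (w - z).
Proof.
  intros [_ Hd] eps Heps.
  destruct (Hd z (fun P HP => HP) (mkposreal eps Heps)) as [[del Hdel] H].
  exists del; split; [exact Hdel|]. intros w Hw. exact (H w Hw).
Qed.

Lemma derivable_pt_lim_Im_line (f : C -> C) (z u D : C) (t : R) :
  is_derive (K := C_AbsRing) (V := C_NormedModule) f (z + RtoC t * u)%C D ->
  derivable_pt_lim (fun t => Im (f (z + RtoC t * u)%C)) t (Im (u * D)).
Proof.
  intros Hd eps Heps.
  pose proof (Cmod_ge_0 u) as Hu.
  assert (Heps' : 0 < eps / 2 / (Cmod u + 1)) by (apply Rdiv_lt_0_compat; lra).
  destruct (is_derive_C_little_o _ _ _ Hd _ Heps') as [del [Hdel Ho]].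
  assert (Hdel' : 0 < del / (Cmod u + 1)) by (apply Rdiv_lt_0_compat; lra).
  exists (mkposreal _ Hdel'). intros h Hh0 Hh. simpl in Hh.
  assert (Hh' : 0 < Rabs h) by now apply Rabs_pos_lt.
  set (dF := Im (f (z + RtoC (t + h) * u)%C) - Im (f (z + RtoC t * u)%C) - h * Im (u * D)).
  assert (Hbound : Rabs dF <= eps / 2 / (Cmod u + 1) * (Rabs h * Cmod u)).
  { assert (Hstep : ((z + RtoC (t + h) * u) - (z + RtoC t * u) = RtoC h * u)%C)
      by (apply injective_projections; Cunfold; ring).
    specialize (Ho (z + RtoC (t + h) * u)%C). rewrite Hstep, Cmod_mult, Cmod_R in Ho.
    replace dF with (Im (f (z + RtoC (t + h) * u) - f (z + RtoC t * u) - RtoC h * u * D)%C)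
      by (unfold dF; Cunfold; ring).
    eapply Rle_trans; [apply im_le_Cmod|]. apply Ho.
    apply Rlt_div_r in Hh; [nra | lra]. }
  replace (_ / h - Im (u * D)) with (dF / h) by (unfold dF; field; exact Hh0).
  unfold Rdiv. rewrite Rabs_mult, Rabs_inv.
  apply (Rmult_le_compat_r (/ Rabs h)) in Hbound; [|left; now apply Rinv_0_lt_compat].
  eapply Rle_lt_trans; [exact Hbound|].
  replace (eps / 2 / (Cmod u + 1) * (Rabs h * Cmod u) * / Rabs h)
    with (eps / 2 * (Cmod u / (Cmod u + 1))) by (field; lra).
  apply Rlt_le_trans with (eps / 2 * 1); [|lra].
  apply Rmult_lt_compat_l; [lra|]. apply Rlt_div_l; lra.
Qed.

Lemma not_local_min_Im (f f' : C -> C) (z u : C) (s : R) :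
  locally z (fun w => is_derive (K := C_AbsRing) (V := C_NormedModule) f w (f' w)) ->
  locally 0 (fun t => 0 < t -> s * Im (u * f' (z + RtoC t * u)%C) < 0) ->
  ~ locally z (fun w => s * Im (f z) <= s * Im (f w)).
Proof.
  intros Hder Hdesc Hmin.
  destruct (filter_and _ _ Hdesc (filterlim_Cline_0 z u _ (filter_and _ _ Hder Hmin)))
    as [del Hdel].
  pose proof (cond_pos del) as Hdel0.
  set (T := del / 2).
  assert (HT : 0 < T) by (unfold T; lra).
  assert (Hball : forall t, 0 <= t <= T -> ball 0 del t).
  { intros t Ht. change (Rabs (t - 0) < del).
    rewrite Rminus_0_r, Rabs_right by lra. unfold T in Ht; lra. }
  destruct (MVT_cor2 (fun t => s * Im (f (z + RtoC t * u)%C))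
                     (fun t => s * Im (u * f' (z + RtoC t * u)%C)) 0 T HT)
    as [c [Hmvt Hc]].
  { intros c Hc. apply (derivable_pt_lim_scal (fun t => Im (f (z + RtoC t * u)%C))).
    apply derivable_pt_lim_Im_line, (Hdel c (Hball c Hc)). }
  assert (Hz : (z + RtoC 0 * u)%C = z) by (apply injective_projections; Cunfold; ring).
  rewrite Hz in Hmvt.
  destruct (Hdel c (Hball c ltac:(lra))) as [Hneg _].
  destruct (Hdel T (Hball T ltac:(lra))) as [_ [_ HminT]].
  specialize (Hneg (proj1 Hc)).
  nra.
Qed.

Lemma locally_Im_mul_conj_neg {T : UniformSpace} (A B : T -> C) (x : T) (s : R) :
  continuous A x -> continuous B x -> s * Im (A x * Cconj (B x)) < 0 ->
  locally x (fun y => s * Im (A y * Cconj (B y)) < 0).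
Proof.
  intros HA HB Hneg.
  apply (locally_lt_of_continuous (fun y => s * Im (A y * Cconj (B y)))); [|exact Hneg].
  apply (continuous_mult (K := R_AbsRing) (fun _ => s)); [apply continuous_const|].
  now apply continuous_Im_mul_conj.
Qed.

Lemma descent_direction (Q Rf : C -> C) (z q0 q1 q2 : C) (s : R) :
  s <> 0 -> (forall h, Q (z + h) = q0 + h * q1 + h * h * q2)%C ->
  continuous Rf z -> Rf z <> 0%C -> q0 <> 0%C \/ q1 <> 0%C ->
  exists u, locally 0 (fun t => 0 < t ->
    s * Im (u * (Q (z + RtoC t * u) / Rf (z + RtoC t * u)))%C < 0).
Proof.
  intros Hs HQ HRc HR0 Hq.
  assert (Hz : forall u, (z + RtoC 0 * u)%C = z)
    by (intros; apply injective_projections; Cunfold; ring).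
  assert (HRt : forall u, continuous (fun t : R => Rf (z + RtoC t * u)%C) 0).
  { intros u. unfold continuous. rewrite Hz.
    eapply filterlim_comp; [apply filterlim_Cline_0 | exact HRc]. }
  (* At a zero of Q, u Q(z + t u) = t (u^2 q1 + t u^3 q2) decides the sign; otherwise
     the direction u^2 gives a first-order decrease. *)
  destruct (classic (q0 = 0%C)) as [Hq0|Hq0].
  - assert (Hq1 : q1 <> 0%C) by (destruct Hq; tauto).
    destruct (exists_sqr_Im_mul_conj_neg s q1 (Rf z) Hs Hq1 HR0) as [u Hu]. exists u.
    set (A := fun t : R => (u * u * q1 + RtoC t * (u * u * u * q2))%C).
    assert (HA0 : s * Im (A 0 * Cconj (Rf (z + RtoC 0 * u)))%C < 0).
    { rewrite Hz. replace (A 0) with (u * u * q1)%C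
        by (unfold A; apply injective_projections; Cunfold; ring).
      exact Hu. }
    generalize (locally_Im_mul_conj_neg A _ 0 s (continuous_Cline _ _ 0) (HRt u) HA0).
    apply filter_imp. intros t Ht Htpos.
    unfold Cdiv. rewrite Cmult_assoc. apply Im_div_sign.
    replace (s * Im (u * Q (z + RtoC t * u) * Cconj (Rf (z + RtoC t * u)))%C)
      with (t * (s * Im (A t * Cconj (Rf (z + RtoC t * u)))%C))
      by (rewrite HQ, Hq0; unfold A; Cunfold; ring).
    nra.
  - destruct (exists_sqr_Im_mul_conj_neg s q0 (Rf z) Hs Hq0 HR0) as [u Hu]. exists (u * u)%C.
    set (A := fun t : R => (u * u * q0 + RtoC t * (u * u * (u * u) * q1
                              + RtoC t * (u * u * (u * u) * (u * u) * q2)))%C).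
    assert (HA0 : s * Im (A 0 * Cconj (Rf (z + RtoC 0 * (u * u))))%C < 0).
    { rewrite Hz. replace (A 0) with (u * u * q0)%C
        by (unfold A; apply injective_projections; Cunfold; ring).
      exact Hu. }
    generalize (locally_Im_mul_conj_neg A _ 0 s (continuous_Cpoly2 _ _ _ 0) (HRt _) HA0).
    apply filter_imp. intros t Ht _.
    unfold Cdiv. rewrite Cmult_assoc. apply Im_div_sign.
    replace (u * u * Q (z + RtoC t * (u * u)))%C with (A t)
      by (rewrite HQ; unfold A; apply injective_projections; Cunfold; ring).
    exact Ht.
Qed.

Lemma open_half_plane (s : R) : open (fun z : C => 0 < s * Im z).
Proof.
  intros z Hz.
  assert (Hr : 0 < Rabs (Im z)) by (apply Rabs_pos_lt; intros H; rewrite H in Hz; lra).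
  exists (mkposreal _ Hr). intros w Hw.
  destruct (proj1 (ball_C z w _) Hw) as [_ Him]. simpl in Him.
  assert (Hsign : 0 < Im w * Im z) by (unfold Rabs in *; repeat destruct Rcase_abs; nra).
  nra.
Qed.

Lemma open_not_on_arc (gamma : R -> C) :
  (forall t, continuous gamma t) -> open (fun z => ~ on_arc gamma z).
Proof.
  intros Hg w Hw.
  set (dist := fun t => Rabs (Re (gamma t) - Re w) + Rabs (Im (gamma t) - Im w)).
  destruct (continuity_ab_min dist 0 1) as [t0 [Hmin Ht0]]; [lra| |].
  { intros t _. apply continuity_pt_filterlim. unfold dist.
    apply (continuous_plus (V := R_NormedModule) (fun t => Rabs (Re (gamma t) - Re w))
                                                 (fun t => Rabs (Im (gamma t) - Im w)));
      apply continuous_Rabs_comp.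
    - apply (continuous_minus (V := R_NormedModule) (fun t => Re (gamma t)) (fun _ => Re w));
        auto using continuous_Re_comp, continuous_const.
    - apply (continuous_minus (V := R_NormedModule) (fun t => Im (gamma t)) (fun _ => Im w));
        auto using continuous_Im_comp, continuous_const. }
  assert (Hpos : 0 < dist t0).
  { pose proof (Rabs_pos (Re (gamma t0) - Re w)) as Hre0.
    pose proof (Rabs_pos (Im (gamma t0) - Im w)) as Him0.
    apply Rnot_le_lt. intros Hzero. apply Hw. exists t0. split; [exact Ht0|].
    unfold dist in Hzero.
    assert (Hre : Rabs (Re (gamma t0) - Re w) = 0) by lra.
    assert (Him : Rabs (Im (gamma t0) - Im w) = 0) by lra.
    apply Rabs_eq_0 in Hre. apply Rabs_eq_0 in Him.
    apply injective_projections; unfold Re, Im in *; lra. }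
  assert (Hr : 0 < dist t0 / 2) by lra.
  exists (mkposreal _ Hr). intros v Hv [t [Ht Hvt]].
  destruct (proj1 (ball_C w v _) Hv) as [Hre Him]. simpl in Hre, Him.
  specialize (Hmin t Ht). unfold dist in Hmin at 2. rewrite Hvt in Hmin.
  lra.
Qed.

Lemma open_not_on_conj_arc (gamma : R -> C) :
  (forall t, continuous gamma t) -> open (fun z => ~ on_conj_arc gamma z).
Proof.
  intros Hg w Hw. destruct (open_not_on_arc gamma Hg (Cconj w) Hw) as [eps Heps].
  exists eps. intros v Hv. apply Heps.
  destruct (proj1 (ball_C _ _ _) Hv) as [Hre Him].
  apply ball_C. rewrite !re_conj, !im_conj. split; [exact Hre|].
  replace (- Im v - - Im w) with (- (Im v - Im w)) by ring. now rewrite Rabs_Ropp.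
Qed.

Lemma not_on_arc_of_Im_nonpos (gamma : R -> C) :
  (forall t, 0 <= t <= 1 -> 0 < Im (gamma t)) -> forall z, Im z <= 0 -> ~ on_arc gamma z.
Proof. intros Hup z Hz [t [Ht <-]]. specialize (Hup t Ht). lra. Qed.

Lemma not_on_conj_arc_of_Im_nonneg (gamma : R -> C) :
  (forall t, 0 <= t <= 1 -> 0 < Im (gamma t)) -> forall z, 0 <= Im z -> ~ on_conj_arc gamma z.
Proof.
  intros Hup z Hz. apply (not_on_arc_of_Im_nonpos gamma Hup). rewrite im_conj. lra.
Qed.

Lemma Im_asymptotic_const_eq_0 (p : C -> C) (E : C) (K M : R) :
  (forall z, M < Cmod z -> Cmod (p z - z - E) <= K / Cmod z) ->
  (forall x : R, Im (p (RtoC x)) = 0) -> Im E = 0.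
Proof.
  intros Hasym Hreal.
  destruct (Req_dec (Im E) 0) as [|HE]; [assumption|exfalso].
  assert (Ha : 0 < Rabs (Im E)) by now apply Rabs_pos_lt.
  set (x := Rmax M 0 + 1 + Rabs K / Rabs (Im E)).
  pose proof (Rmax_l M 0) as HMx. pose proof (Rmax_r M 0) as H0x.
  assert (HKa : 0 <= Rabs K / Rabs (Im E)) by (apply Rdiv_le_0_compat; [apply Rabs_pos | lra]).
  assert (Hx : 0 < x) by (unfold x; lra).
  assert (Hcx : Cmod (RtoC x) = x) by (rewrite Cmod_R; apply Rabs_right; lra).
  assert (Hle : Rabs (Im E) <= K / x).
  { rewrite <- Hcx. eapply Rle_trans; [|apply Hasym; rewrite Hcx; unfold x; lra].
    replace (Im E) with (- Im (p (RtoC x) - RtoC x - E)%C)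
      by (generalize (Hreal x); Cunfold; intros; lra).
    rewrite Rabs_Ropp. apply im_le_Cmod. }
  assert (HKx : Rabs K < x * Rabs (Im E)).
  { assert (Hq : Rabs K / Rabs (Im E) < x) by (unfold x; lra).
    apply Rlt_div_l in Hq; lra. }
  assert (HKx' : K / x < Rabs (Im E))
    by (apply Rlt_div_l; [lra|]; pose proof (Rle_abs K); lra).
  lra.
Qed.

Lemma Rf_neq_0_on_Omega (z1 z2 : C) (gamma : R -> C) (Rf : C -> C) :
  is_arc gamma z1 z2 -> (forall z, Omega gamma z -> (Rf z * Rf z)%C = quartic z1 z2 z) ->
  forall z, Omega gamma z -> Rf z <> 0%C.
Proof.
  intros [_ [_ [Hg0 Hg1]]] HR z [Ha Hc] Hzero.
  assert (Hq : quartic z1 z2 z = 0%C)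
    by (rewrite <- HR by (split; assumption); rewrite Hzero; apply Cmult_0_l).
  assert (Hroot : forall q, (z - q)%C = 0%C -> z = q).
  { intros q Hzq. apply injective_projections;
      [generalize (f_equal fst Hzq) | generalize (f_equal snd Hzq)]; simpl; lra. }
  revert Hq. unfold quartic. repeat apply Cmult_neq_0; intros Hzq; apply Hroot in Hzq; subst z.
  - apply Ha. exists 0. split; [lra | exact Hg0].
  - apply Hc. exists 0. split; [lra | now rewrite Cconj_conj].
  - apply Ha. exists 1. split; [lra | exact Hg1].
  - apply Hc. exists 1. split; [lra | now rewrite Cconj_conj].
Qed.

Section HalfPlane.

Variables (p Rf : C -> C) (D S : C -> Prop) (a c0 s : R) (E : C).

Hypothesis s_neq_0 : s <> 0.
Hypothesis open_not_S : open (fun z => ~ S z).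
Hypothesis D_real : forall z, Im z = 0 -> D z.
Hypothesis D_half_plane : forall z, 0 < s * Im z -> ~ S z -> D z.
Hypothesis p_derive : forall z, D z ->
  is_derive (K := C_AbsRing) (V := C_NormedModule) p z
    ((z * z - RtoC a * z + RtoC c0) / Rf z)%C.
Hypothesis Rf_continuous : forall z, D z -> continuous Rf z.
Hypothesis Rf_neq_0 : forall z, D z -> Rf z <> 0%C.
Hypothesis Im_p_eq_0 : forall z, D z -> (Im (p z) = 0 <-> Im z = 0).
Hypothesis Im_p_at_S : forall w, S w ->
  filterlim (fun z => Im (p z)) (within D (locally w)) (locally 0).
Hypothesis Im_E : Im E = 0.
Hypothesis p_asymptotics : exists K M, 0 < M /\
  forall z, M < Cmod z -> Cmod (p z - z - E) <= K / Cmod z.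

Let U (z : C) : Prop := 0 < s * Im z /\ ~ S z.
Let g (z : C) : R := s * Im (p z).

Let U_open : open U.
Proof. exact (open_and _ _ (open_half_plane s) open_not_S). Qed.

Let g_continuous z : D z -> continuous g z.
Proof.
  intros Hz. apply (continuous_mult (K := R_AbsRing) (fun _ => s)); [apply continuous_const|].
  apply continuous_Im_comp, (is_derive_C_continuous _ _ _ (p_derive z Hz)).
Qed.

Let g_boundary z : ~ U z -> filterlim g (within U (locally z)) (locally 0).
Proof.
  intros HUz.
  destruct (Rtotal_order (s * Im z) 0) as [Hneg|[Hzero|Hpos]].
  - intros P _. unfold filtermap, within.
    generalize (open_half_plane (- s) z ltac:(lra)). apply filter_imp.
    intros w Hw [HUw _]. lra.
  - assert (Hz : Im z = 0)
      by (destruct (Rmult_integral _ _ Hzero); [contradiction | assumption]).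
    assert (Hgz : g z = 0) by (unfold g; rewrite (proj2 (Im_p_eq_0 z (D_real z Hz)) Hz); ring).
    rewrite <- Hgz. eapply filterlim_filter_le_1;
      [apply filter_le_within | exact (g_continuous z (D_real z Hz))].
  - assert (HSz : S z) by (apply NNPP; intros HSz; exact (HUz (conj Hpos HSz))).
    assert (Hscale : filterlim (fun y => s * y) (locally 0) (locally 0)).
    { rewrite <- (Rmult_0_r s) at 2. apply (continuous_mult (K := R_AbsRing) (fun _ => s));
        [apply continuous_const | apply continuous_id]. }
    intros P HP. generalize (filterlim_comp _ _ _ _ _ _ _ _ (Im_p_at_S z HSz) Hscale P HP).
    unfold filtermap, within. apply filter_imp. intros w Hw [Hsw HSw].
    exact (Hw (D_half_plane w Hsw HSw)).
Qed.

Let g_at_infinity eps : 0 < eps -> exists M, forall z, M < Cmod z -> U z -> - eps <= g z.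
Proof.
  intros Heps. destruct p_asymptotics as [K [M [HM Hbound]]].
  exists (Rmax M (Rabs s * Rabs K / eps)). intros z Hz [Hsz _].
  pose proof (Rmax_l M (Rabs s * Rabs K / eps)) as HMz.
  pose proof (Rmax_r M (Rabs s * Rabs K / eps)) as HKz.
  assert (Hz0 : 0 < Cmod z) by lra.
  assert (Herr : Rabs (s * Im (p z - z - E)%C) <= Rabs s * (Rabs K / Cmod z)).
  { rewrite Rabs_mult. apply Rmult_le_compat_l; [apply Rabs_pos|].
    eapply Rle_trans; [apply im_le_Cmod|]. eapply Rle_trans; [apply (Hbound z); lra|].
    unfold Rdiv. apply Rmult_le_compat_r; [left; now apply Rinv_0_lt_compat | apply Rle_abs]. }
  assert (Hsmall : Rabs s * (Rabs K / Cmod z) < eps).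
  { replace (Rabs s * (Rabs K / Cmod z)) with (Rabs s * Rabs K / Cmod z) by (field; lra).
    assert (Hq : Rabs s * Rabs K / eps < Cmod z) by lra.
    apply Rlt_div_l in Hq; [|lra]. apply Rlt_div_l; lra. }
  replace (g z) with (s * Im (p z - z - E)%C + s * Im z)
    by (unfold g; Cunfold; rewrite Im_E; ring).
  pose proof (Rle_abs (- (s * Im (p z - z - E)%C))). rewrite Rabs_Ropp in *. lra.
Qed.

Let g_no_local_min z : U z -> ~ locally z (fun w => g z <= g w).
Proof.
  intros [Hsz HSz].
  assert (HDz : D z) by exact (D_half_plane z Hsz HSz).
  destruct (descent_direction (fun w => w * w - RtoC a * w + RtoC c0)%C Rf z
              (z * z - RtoC a * z + RtoC c0) (z + z - RtoC a) 1 s)%C as [u Hu].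
  - exact s_neq_0.
  - intros h. apply injective_projections; Cunfold; ring.
  - exact (Rf_continuous z HDz).
  - exact (Rf_neq_0 z HDz).
  - right. intros Hq. assert (Him : Im (z + z - RtoC a)%C = 0) by now rewrite Hq.
    Cunfold. nra.
  - apply (not_local_min_Im p (fun w => (w * w - RtoC a * w + RtoC c0) / Rf w)%C z u s);
      [|exact Hu].
    generalize (U_open z (conj Hsz HSz)). apply filter_imp. intros w [Hsw HSw].
    exact (p_derive w (D_half_plane w Hsw HSw)).
Qed.

Lemma half_plane_Im_sign z : 0 < s * Im z -> ~ S z -> 0 < s * Im (p z - E)%C.
Proof.
  intros Hsz HSz.
  replace (Im (p z - E)%C) with (Im (p z)) by (Cunfold; rewrite Im_E; ring).
  assert (Hge : 0 <= g z).
  { apply (minimum_principle U g); auto.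
    - intros w [Hsw HSw]. exact (g_continuous w (D_half_plane w Hsw HSw)).
    - split; assumption. }
  assert (Hne : Im (p z) <> 0).
  { intros H0. apply (proj1 (Im_p_eq_0 z (D_half_plane z Hsz HSz))) in H0.
    rewrite H0 in Hsz. lra. }
  unfold g in Hge. destruct Hge as [|Heq]; [assumption|].
  symmetry in Heq. apply Rmult_integral in Heq. tauto.
Qed.

End HalfPlane.

Theorem lemma2p1 :
  forall (z1 z2 : C) (gamma : R -> C) (Rf p : C -> C) (c0 : R) (E : C),
    0 < Im z1 < Im z2 ->
    (* Sigma_1 = gamma([0,1]) is an arc in C^+ from z1 to z2; Sigma_2 its conjugate *)
    is_arc gamma z1 z2 ->
    (forall t : R, 0 <= t <= 1 -> 0 < Im (gamma t)) ->
    (* Rf is the branch of R = sqrt(quartic) analytic off the cuts, sheet 1 *)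
    (forall z, Omega gamma z -> (Rf z * Rf z)%C = quartic z1 z2 z) ->
    (forall z, Omega gamma z -> continuous Rf z) ->
    (exists M : R, forall x : R, M < x ->
        Im (Rf (RtoC x)) = 0 /\ 0 < Re (Rf (RtoC x))) ->
    (* p is single valued, analytic on Omega, with p' = (z^2 - Re(z1+z2) z + c0)/R *)
    (forall z, Omega gamma z ->
        is_derive (K := C_AbsRing) (V := C_NormedModule) p z
          ((z * z - RtoC (Re (z1 + z2)) * z + RtoC c0) / Rf z)%C) ->
    (* p(z) = int_{z2}^z dp *)
    filterlim p (within (Omega gamma) (locally z2)) (locally (RtoC 0)) ->
    (* p(z) = z + E + O(1/z) as z -> infinity *)
    (exists K M : R, 0 < M /\ forall z, M < Cmod z ->
        Cmod (p z - z - E)%C <= K / Cmod z) ->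
    (* level set {Im p = 0} = R ∪ Sigma_1 ∪ Sigma_2 *)
    (forall z, Omega gamma z -> (Im (p z) = 0 <-> Im z = 0)) ->
    (forall w, on_arc gamma w \/ on_conj_arc gamma w ->
        filterlim (fun z => Im (p z)) (within (Omega gamma) (locally w))
          (locally 0)) ->
    forall z : C,
      (0 < Im z -> ~ on_arc gamma z -> 0 < Im (p z - E)%C) /\
      (Im z < 0 -> ~ on_conj_arc gamma z -> Im (p z - E)%C < 0).
Proof.
  intros z1 z2 gamma Rf p c0 E _ Harc Hup HR HRc _ Hder _ Hasym Hlev Hcut.
  assert (HOmega_real : forall z, Im z = 0 -> Omega gamma z).
  { intros z Hz. split;
      [apply not_on_arc_of_Im_nonpos | apply not_on_conj_arc_of_Im_nonneg]; auto; lra. }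
  assert (HImE : Im E = 0).
  { destruct Hasym as [K [M [_ Hbound]]]. apply (Im_asymptotic_const_eq_0 p E K M Hbound).
    intros x. apply Hlev; [apply HOmega_real|]; reflexivity. }
  pose proof (Rf_neq_0_on_Omega z1 z2 gamma Rf Harc HR) as HR0.
  destruct Harc as [Hgc _].
  intros z. split; intros Hz Hna.
  - enough (0 < 1 * Im (p z - E)%C) by lra.
    refine (half_plane_Im_sign p Rf (Omega gamma) (on_arc gamma) (Re (z1 + z2)) c0 1 E
              _ (open_not_on_arc gamma Hgc) HOmega_real _ Hder HRc HR0 Hlev _ HImE Hasym
              z _ Hna); [lra | | | lra].
    + intros w Hw HSw. split; [exact HSw|].
      apply not_on_conj_arc_of_Im_nonneg; auto; lra.
    + intros w Hw. apply Hcut. now left.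
  - enough (0 < -1 * Im (p z - E)%C) by lra.
    refine (half_plane_Im_sign p Rf (Omega gamma) (on_conj_arc gamma) (Re (z1 + z2)) c0 (-1) E
              _ (open_not_on_conj_arc gamma Hgc) HOmega_real _ Hder HRc HR0 Hlev _ HImE Hasym
              z _ Hna); [lra | | | lra].
    + intros w Hw HSw. split; [|exact HSw].
      apply not_on_arc_of_Im_nonpos; auto; lra.
    + intros w Hw. apply Hcut. now right.
Qed.
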